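(* Assume the standing conventions of the context. Let $\Psi'=\binom{c_k}{d_l}$ be a consecutive pair in $Z'_{\mathrm I}$ (so $l\in\{k-1,k\}$), and suppose $\mathcal D_{Z,Z'}\neq\emptyset$. Then $(Z,\Lambda_{\Psi'})\in\mathcal D_{Z,Z'}$ if and only if \[ \begin{cases} a_k>c_k\text{ and }d_k\geq b_k, & \text{if $m'=m$ and $l=k$};\\ c_k\geq a_k\text{ and }b_{k-1}>d_{k-1}, & \text{if $m'=m$ and $l=k-1$};\\ a_k\geq c_k\text{ and }d_k>b_k, & \text{if $m'=m+1$ and $l=k$};\\ c_k>a_k\text{ and }b_{k-1}\geq d_{k-1}, & \text{if $m'=m+1$ and $l=k-1$}. \end{cases} \]
   Context: A symbol is an array $\Lambda=\binom{a'_1,\ldots,a'_{m_1}}{b'_1,\ldots,b'_{m_2}}$ of two strictly decreasing finite sequences of nonnegative integers (top row, bottom row); its defect is $\mathrm{def}(\Lambda)=m_1-m_2$. Standing assumptions: $Z=\binom{a_1,\ldots,a_{m+1}}{b_1,\ldots,b_m}$ is a special symbol of defect $1$, i.e. $a_1\ge b_1\ge a_2\ge b_2\ge\cdots\ge b_m\ge a_{m+1}$; $Z'=\binom{c_1,\ldots,c_{m'}}{d_1,\ldots,d_{m'}}$ is a special symbol of defect $0$, i.e. $c_1\ge d_1\ge c_2\ge d_2\ge\cdots\ge c_{m'}\ge d_{m'}$; and $m'\in\{m,m+1\}$. For a symbol $Y$, $Y_{\mathrm I}$ is the set of entries of $Y$ occurring in exactly one row. For $M\subset Z_{\mathrm I}$,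 $\Lambda_M$ is the symbol obtained from $Z$ by moving every entry of $M$ to the other row (rows re-sorted decreasingly); for $N\subset Z'_{\mathrm I}$, $\Lambda_N$ is obtained from $Z'$ in the same way. $\overline{\mathcal S}_Z=\{\Lambda_M: M\subset Z_{\mathrm I}\}$, $\overline{\mathcal S}_{Z'}=\{\Lambda_N:N\subset Z'_{\mathrm I}\}$; $\mathcal S_{Z,1}$ (resp. $\mathcal S_{Z',0}$) is the set of elements of $\overline{\mathcal S}_Z$ of defect $1$ (resp. of $\overline{\mathcal S}_{Z'}$ of defect $0$). A consecutive pair in $Z'_{\mathrm I}$ is a two-element subset $\{c_k,d_l\}\subset Z'_{\mathrm I}$, written $\binom{c_k}{d_l}$, with $l\in\{k-1,k\}$; a consecutive pair in $Z_{\mathrm I}$ is $\{a_k,b_l\}\subset Z_{\mathrm I}$, written $\binom{a_k}{b_l}$, with $l\in\{k-1,k\}$. Relation $\overline{\mathcal B}^+_{Z,Z'}\subset\overline{\mathcal S}_Z\times\overline{\mathcal S}_{Z'}$: for $\Lambda=\binom{a'_1,\ldots,a'_{m_1}}{b'_1,\ldots,b'_{m_2}}\in\overline{\mathcal S}_Z$ and $\Lambda'=\binom{c'_1,\ldots,c'_{m'_1}}{d'_1,\ldots,d'_{m'_2}}\in\overline{\mathcal S}_{Z'}$, $(\Lambda,\Lambda')\in\overline{\mathcal B}^+_{Z,Z'}$ iff $\mathrm{def}(\Lambda')=1-\mathrm{def}(\Lambda)$ and: if $m'=m$, $a'_i>d'_i\ge a'_{i+1}$ for $1\le i\le m'_2$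 and $b'_{i-1}>c'_i\ge b'_i$ for $1\le i\le m'_1$; if $m'=m+1$, $a'_i\ge d'_i>a'_{i+1}$ for $1\le i\le m'_2$ and $b'_{i-1}\ge c'_i>b'_i$ for $1\le i\le m'_1$; here $b'_0=+\infty$ and nonexistent entries $a'_j,b'_j$ beyond the row lengths are $-\infty$. Then $\mathcal D_{Z,Z'}=\overline{\mathcal B}^+_{Z,Z'}\cap(\mathcal S_{Z,1}\times\mathcal S_{Z',0})$. *)

From mathcomp Require Import all_boot all_order all_algebra.
Set Implicit Arguments. Unset Strict Implicit. Unset Printing Implicit Defensive.
Import GRing.Theory Num.Theory.

(* A symbol: (top row, bottom row), each a strictly decreasing seq of nats. *)
Definition symbol := (seq nat * seq nat)%type.

Definition defect (L : symbol) : int := ((size L.1)%:Z - (size L.2)%:Z)%R.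

Definition strdec (s : seq nat) : bool := sorted (fun x y => y < x) s.

(* 1-based entry of a row (natural number, only used for in-range indices) *)
Definition e (s : seq nat) (i : nat) : nat := nth 0 s i.-1.

(* extended entries: nonexistent entries are -oo, b'_0 = +oo *)
Inductive ext := NegInf | Fin of nat | PosInf.

Definition ext_le (x y : ext) : bool :=
  match x, y with
  | NegInf, _ => true
  | _, PosInf => true
  | Fin a, Fin b => a <= b
  | _, _ => false
  end.
Definition ext_lt (x y : ext) : bool := ~~ ext_le y x.

Definition ent (s : seq nat) (i : nat) : ext :=
  if (0 < i) && (i <= size s) then Fin (nth 0 s i.-1) else NegInf.
Definition entb (s : seq nat) (i : nat) : ext :=
  if i == 0 then PosInf else ent s i.

(* Y_I : entries occurring in exactly one row *)
Definition singles (L : symbol) : seq nat :=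
  [seq x <- L.1 ++ L.2 | (x \in L.1) != (x \in L.2)].

(* Lambda_M : move every entry of M to the other row, rows re-sorted decreasingly *)
Definition move (L : symbol) (M : seq nat) : symbol :=
  (sort (fun x y => y <= x) ([seq x <- L.1 | x \notin M] ++ [seq x <- L.2 | x \in M]),
   sort (fun x y => y <= x) ([seq x <- L.2 | x \notin M] ++ [seq x <- L.1 | x \in M])).

Definition Sbar (Z L : symbol) : Prop :=
  exists M : seq nat, {subset M <= singles Z} /\ L = move Z M.

Definition special1 (Z : symbol) (m : nat) : Prop :=
  [/\ size Z.1 = m.+1, size Z.2 = m, strdec Z.1, strdec Z.2 &
      (forall i, 1 <= i <= m -> e Z.2 i <= e Z.1 i /\ e Z.1 i.+1 <= e Z.2 i)].

Definition special0 (Z' : symbol) (m' : nat) : Prop :=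
  [/\ size Z'.1 = m', size Z'.2 = m', strdec Z'.1,
      strdec Z'.2 &
      (forall i, 1 <= i <= m' -> e Z'.2 i <= e Z'.1 i) /\
      (forall i, 1 <= i < m' -> e Z'.1 i.+1 <= e Z'.2 i)].

(* the relation \bar B^+_{Z,Z'}; m = size Z.2, m' = size Z'.1 *)
Definition Bplus (Z Z' L L' : symbol) : Prop :=
  defect L' = (1 - defect L)%R /\
  if size Z'.1 == size Z.2 then
    (forall i, 1 <= i <= size L'.2 ->
       ext_lt (ent L'.2 i) (ent L.1 i) /\ ext_le (ent L.1 i.+1) (ent L'.2 i)) /\
    (forall i, 1 <= i <= size L'.1 ->
       ext_lt (ent L'.1 i) (entb L.2 i.-1) /\ ext_le (ent L.2 i) (ent L'.1 i))
  else
    (forall i, 1 <= i <= size L'.2 ->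
       ext_le (ent L'.2 i) (ent L.1 i) /\ ext_lt (ent L.1 i.+1) (ent L'.2 i)) /\
    (forall i, 1 <= i <= size L'.1 ->
       ext_le (ent L'.1 i) (entb L.2 i.-1) /\ ext_lt (ent L.2 i) (ent L'.1 i)).

(* D_{Z,Z'} = \bar B^+_{Z,Z'} ∩ (S_{Z,1} × S_{Z',0}) *)
Definition Dset (Z Z' L L' : symbol) : Prop :=
  [/\ Bplus Z Z' L L', Sbar Z L /\ defect L = 1%R & Sbar Z' L' /\ defect L' = 0%R].

From mathcomp Require Import all_boot all_order all_algebra zify.
Set Implicit Arguments. Unset Strict Implicit. Unset Printing Implicit Defensive.

(* 1. Counting form.  For a nonincreasing row s let cnt s x = #{y in s | x <= y}.
      Every inequality between entries used in B^+ is equivalent to an inequality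
      between counting functions (cmp_cnt, cnt_cmp).  Hence the interlacing
      conditions of B^+ become four pointwise inequalities between the counting
      functions of the four rows (interlace_cnt, cnt_interlace_inv).
   2. Nonemptiness.  Moving entries between rows preserves the sum of the two
      counting functions, and the rows of a special symbol have counting
      functions differing by 0 or 1.  An arithmetic argument then transports the
      counting form of interlacing from any (L, L') in D_{Z,Z'} to (Z, Z'), so
      Z and Z' themselves interlace (Dset_interlace).
   3. Swapping.  Lambda_Psi' is Z' with c_k and d_l exchanged in place
      (move_consecutive_pair).  Interlacing of Z with it differs from that of Z
      with Z' only at the two modified cells (interlace_update); at each cell one
      of the two conditions is automatic from step 2 and the special shape of Z',
      and the remaining two are exactly the stated ones (swap_same_index,
      swap_previous_index). *)

Definition nonincr (s : seq nat) : bool := sorted (fun x y => y <= x) s.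

Lemma nonincr_trans : transitive (fun x y : nat => y <= x).
Proof. by move=> x y z /= yx zy; apply: leq_trans zy yx. Qed.

Lemma strdec_nonincr s : strdec s -> nonincr s.
Proof. by apply: sub_sorted => x y /ltnW. Qed.

Definition cmp (strict : bool) (x y : ext) : bool :=
  if strict then ext_lt x y else ext_le x y.

Lemma cmp_le_trans b y x z : cmp b x y -> ext_le y z -> cmp b x z.
Proof. rewrite /cmp /ext_lt; case: b; case: x; case: y; case: z => //= *; lia. Qed.

Lemma le_cmp_trans b y x z : ext_le x y -> cmp b y z -> cmp b x z.
Proof. rewrite /cmp /ext_lt; case: b; case: x; case: y; case: z => //= *; lia. Qed.

(* A comparison is determined by the finite lower bounds of both sides; a strict
   comparison raises every lower bound by one. *)
Lemma cmp_fin_lower (b : bool) x y n : cmp b x y -> ext_le (Fin n) x -> ext_le (Fin (n + b)) y.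
Proof. rewrite /cmp /ext_lt; case: b; case: x; case: y => //= *; lia. Qed.

Lemma fin_lower_cmp (b : bool) x y : x <> PosInf -> y <> NegInf ->
  (forall n, ext_le (Fin n) x -> ext_le (Fin (n + b)) y) -> cmp b x y.
Proof.
move=> xP yN; rewrite /cmp /ext_lt.
case: x xP => [|a|] // _; case: y yN => [|c|] // _; try by case: b.
by move/(_ a (leqnn a)) => /=; case: b => /=; lia.
Qed.

Definition cnt (s : seq nat) (x : nat) : nat := count (fun y => x <= y) s.

Lemma nth_cnt s x i : nonincr s -> i < size s -> (x <= nth 0 s i) = (i < cnt s x).
Proof.
elim: s i => [|y t IH] i //= /[dup] Hs; rewrite /nonincr (path_sortedE nonincr_trans).
case/andP=> /allP Ht St; have lt_cnt0 : y < x -> cnt t x = 0.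
  move=> yx; apply/eqP; rewrite -leqn0 leqNgt -has_count; apply/hasPn => z zt.
  by rewrite -ltnNge (leq_ltn_trans (Ht z zt) yx).
case: i => [|i] Hi /=; case: (leqP x y) => xy; rewrite ?add1n ?ltnS ?IH //.
all: by rewrite lt_cnt0.
Qed.

Lemma ent_fin s i : 0 < i <= size s -> ent s i = Fin (nth 0 s i.-1).
Proof. by rewrite /ent => ->. Qed.

Lemma ent_entb s i : 0 < i -> entb s i = ent s i.
Proof. by case: i. Qed.

Lemma ent_neq_PosInf s i : ent s i <> PosInf.
Proof. by rewrite /ent; case: ifP. Qed.

Lemma entb_neq_NegInf s j : j <= size s -> entb s j <> NegInf.
Proof. by case: j => // j Hj; rewrite ent_entb // ent_fin. Qed.

Lemma entP s x i : nonincr s -> 0 < i -> ext_le (Fin x) (ent s i) = (i <= cnt s x).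
Proof.
move=> Hs i_gt0; rewrite /ent i_gt0 /=; case: leqP => Hi /=.
  by rewrite nth_cnt ?prednK // (leq_trans _ Hi) // prednK.
by apply/esym/negbTE; rewrite -ltnNge (leq_ltn_trans (count_size _ _) Hi).
Qed.

Lemma entbP s x j : nonincr s -> ext_le (Fin x) (entb s j) = (j <= cnt s x).
Proof. by case: j => [|j] // Hs; rewrite ent_entb // entP. Qed.

Lemma cmp_cnt (b : bool) u v i j x : nonincr u -> nonincr v -> 0 < i ->
  cmp b (ent u i) (entb v j) -> i <= cnt u x -> j <= cnt v (x + b).
Proof. by move=> su sv i_gt0 uv ux; rewrite -entbP //; apply: cmp_fin_lower uv _; rewrite entP. Qed.

Lemma cnt_cmp (b : bool) u v i j : nonincr u -> nonincr v -> 0 < i -> j <= size v ->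
  (forall x, i <= cnt u x -> j <= cnt v (x + b)) -> cmp b (ent u i) (entb v j).
Proof.
move=> su sv i_gt0 jv uv; apply: fin_lower_cmp; [exact: ent_neq_PosInf | exact: entb_neq_NegInf |].
by move=> x; rewrite entP // entbP //; apply: uv.
Qed.

Lemma cnt_bound (b : bool) d u v : nonincr u -> nonincr v ->
  (forall i, d < i <= size u -> cmp b (ent u i) (entb v (i - d))) ->
  forall x, cnt u x <= cnt v (x + b) + d.
Proof.
move=> su sv uv x; case: (leqP (cnt u x) d) => [le_d | lt_d].
  exact: leq_trans le_d (leq_addl _ _).
have i_range : d < cnt u x <= size u by rewrite lt_d count_size.
have := cmp_cnt su sv (leq_ltn_trans (leq0n d) lt_d) (uv _ i_range) (leqnn _).
by rewrite leq_subLR addnC.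
Qed.

(* The conditions of B^+ on the i-th bottom entry y (resp. top entry y) of the
   defect-0 symbol, relative to the defect-1 symbol L; s = (m' == m). *)
Definition bottom_ok (s : bool) (L : symbol) (i : nat) (y : ext) : Prop :=
  cmp s y (ent L.1 i) /\ cmp (~~ s) (ent L.1 i.+1) y.

Definition top_ok (s : bool) (L : symbol) (i : nat) (y : ext) : Prop :=
  cmp s y (entb L.2 i.-1) /\ cmp (~~ s) (ent L.2 i) y.

Definition interlace (s : bool) (L L' : symbol) : Prop :=
  (forall i, 1 <= i <= size L'.2 -> bottom_ok s L i (ent L'.2 i)) /\
  (forall i, 1 <= i <= size L'.1 -> top_ok s L i (ent L'.1 i)).

Lemma BplusE Z Z' L L' :
  Bplus Z Z' L L' <-> defect L' = (1 - defect L)%R /\ interlace (size Z'.1 == size Z.2) L L'.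
Proof. by rewrite /Bplus; case: (_ == _). Qed.

(* Interlacing in terms of the counting functions a, b (rows of L) and c, d
   (rows of L'). *)
Definition cnt_interlace (s : bool) (a b c d : nat -> nat) : Prop :=
  forall x, [/\ d x <= a (x + s), a x <= d (x + ~~ s) + 1,
                c x <= b (x + s) + 1 & b x <= c (x + ~~ s)].

Section CountingForm.

Variables (L L' : symbol) (n n' : nat).
Hypotheses (oL1 : nonincr L.1) (oL2 : nonincr L.2) (oL1' : nonincr L'.1) (oL2' : nonincr L'.2).
Hypotheses (zL1 : size L.1 = n.+1) (zL2 : size L.2 = n) (zL1' : size L'.1 = n') (zL2' : size L'.2 = n').
Hypothesis nn' : n <= n' <= n.+1.

Lemma interlace_cnt s :
  interlace s L L' -> cnt_interlace s (cnt L.1) (cnt L.2) (cnt L'.1) (cnt L'.2).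
Proof.
case=> bot top x; split.
- rewrite -[cnt L.1 _]addn0; apply: cnt_bound => // i i_range.
  by rewrite subn0 ent_entb; [exact: (proj1 (bot i i_range)) | case/andP: i_range].
- apply: cnt_bound => // -[|[|i]] // i_range; rewrite subn1 /=.
  by apply: (proj2 (bot i.+1 _)); rewrite zL2'; move: i_range nn'; rewrite zL1; lia.
- apply: cnt_bound => // -[|[|i]] // i_range; rewrite subn1 /=.
  exact: (proj1 (top i.+2 _)).
- rewrite -[cnt L'.1 _]addn0; apply: cnt_bound => // -[|i] // i_range.
  rewrite subn0 ent_entb //; apply: (proj2 (top i.+1 _)).
  by rewrite zL1'; move: i_range nn'; rewrite zL2; lia.
Qed.

Lemma cnt_interlace_inv s :
  cnt_interlace s (cnt L.1) (cnt L.2) (cnt L'.1) (cnt L'.2) -> interlace s L L'.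
Proof.
move=> C; split=> -[|i] // i_range; have := i_range; rewrite ?zL1' ?zL2' => i_le; split.
- rewrite -[ent L.1 _]ent_entb //; apply: cnt_cmp => //; first by rewrite zL1; lia.
  by move=> x hx; have [c1 _ _ _] := C x; lia.
- rewrite -[ent L'.2 _]ent_entb //; apply: cnt_cmp => //.
  by move=> x hx; have [_ c2 _ _] := C x; lia.
- apply: cnt_cmp => //; first by rewrite zL2; lia.
  by move=> x hx; have [_ _ c3 _] := C x; lia.
- rewrite -[ent L'.1 _]ent_entb //; apply: cnt_cmp => //.
  by move=> x hx; have [_ _ _ c4] := C x; lia.
Qed.

End CountingForm.

Lemma cnt_interlace_transfer s a b c d a' b' c' d' :
  cnt_interlace s a' b' c' d' ->
  (forall x, a' x + b' x = a x + b x) -> (forall x, c' x + d' x = c x + d x) ->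
  (forall x, b x <= a x /\ a x <= b x + 1) -> (forall x, d x <= c x /\ c x <= d x + 1) ->
  cnt_interlace s a b c d.
Proof.
move=> C sab scd hab hcd x.
have := C x; have := C x.+1; have := sab x; have := sab x.+1; have := scd x; have := scd x.+1.
have := hab x; have := hab x.+1; have := hcd x; have := hcd x.+1.
case: s {C} => /=; rewrite ?addn1 ?addn0.
all: by move=> -[? ?] [? ?] [? ?] [? ?] ? ? ? ? [? ? ? ?] [? ? ? ?]; split; lia.
Qed.

Lemma count_filter_split (P q : pred nat) s :
  count P [seq x <- s | ~~ q x] + count P [seq x <- s | q x] = count P s.
Proof. by elim: s => //= y s IH; case: (q y) => /=; lia. Qed.

Lemma Sbar_rows Z L : Sbar Z L ->
  [/\ nonincr L.1, nonincr L.2 &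
      forall P, count P L.1 + count P L.2 = count P Z.1 + count P Z.2].
Proof.
case=> M [_ ->]; split; try by apply: sort_sorted => x y; apply: leq_total.
move=> P; rewrite /move /= !count_sort !count_cat.
rewrite -(count_filter_split P (mem M) Z.1) -(count_filter_split P (mem M) Z.2) /=; lia.
Qed.

Lemma special1_balanced Z m : special1 Z m ->
  forall x, cnt Z.2 x <= cnt Z.1 x /\ cnt Z.1 x <= cnt Z.2 x + 1.
Proof.
case=> z1 z2 /strdec_nonincr o1 /strdec_nonincr o2 H x; split.
- have := cnt_bound (b := false) (d := 0) o2 o1 _ x; rewrite !addn0; apply=> i i_range.
  rewrite subn0 ent_entb ?ent_fin ?z1; try by case/andP: i_range; lia.
  by have [] := H i; rewrite -?z2.
- have := cnt_bound (b := false) (d := 1) o1 o2 _ x; rewrite addn0; apply=> -[|[|i]] // i_range.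
  rewrite subn1 /= ent_entb // !ent_fin ?z2; try by move: i_range; rewrite z1; lia.
  by apply: (proj2 (H i.+1 _)); move: i_range; rewrite z1; lia.
Qed.

Lemma special0_balanced Z m : special0 Z m ->
  forall x, cnt Z.2 x <= cnt Z.1 x /\ cnt Z.1 x <= cnt Z.2 x + 1.
Proof.
case=> z1 z2 /strdec_nonincr o1 /strdec_nonincr o2 [H H'] x; split.
- have := cnt_bound (b := false) (d := 0) o2 o1 _ x; rewrite !addn0; apply=> i i_range.
  rewrite subn0 ent_entb ?ent_fin ?z1; try by move: i_range; rewrite z2; lia.
  by apply: H; rewrite -z2.
- have := cnt_bound (b := false) (d := 1) o1 o2 _ x; rewrite addn0; apply=> -[|[|i]] // i_range.
  rewrite subn1 /= ent_entb // !ent_fin ?z2; try by move: i_range; rewrite z1; lia.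
  by apply: H'; move: i_range; rewrite z1; lia.
Qed.

Lemma Dset_interlace m m' Z Z' L L' : special1 Z m -> special0 Z' m' -> m <= m' <= m.+1 ->
  Dset Z Z' L L' -> interlace (m' == m) Z Z'.
Proof.
move=> sZ sZ' mm' [/BplusE [_ IL] [SL dL] [SL' dL']].
have [oL1 oL2 cL] := Sbar_rows SL; have [oL1' oL2' cL'] := Sbar_rows SL'.
case: (sZ) => z1 z2 /strdec_nonincr o1 /strdec_nonincr o2 _.
case: (sZ') => z1' z2' /strdec_nonincr o1' /strdec_nonincr o2' _.
have [zL1 zL2] : size L.1 = m.+1 /\ size L.2 = m.
  by move: (cL predT) dL; rewrite !count_predT z1 z2 /defect; lia.
have [zL1' zL2'] : size L'.1 = m' /\ size L'.2 = m'.
  by move: (cL' predT) dL'; rewrite !count_predT z1' z2' /defect; lia.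
rewrite z1' z2 in IL; apply: (cnt_interlace_inv o1 o2 o1' o2' z1 z2 z1' z2' mm').
apply: cnt_interlace_transfer (interlace_cnt oL1 oL2 oL1' oL2' zL1 zL2 zL1' zL2' mm' IL) _ _
  (special1_balanced sZ) (special0_balanced sZ') => x; [exact: cL | exact: cL'].
Qed.

(* The entries of a defect-0 special symbol read in the order
   c_1, d_1, c_2, d_2, ... form a nonincreasing sequence. *)
Definition zigzag (Z : symbol) (j : nat) : nat :=
  if odd j then nth 0 Z.2 j./2 else nth 0 Z.1 j./2.

Lemma zigzag_top Z i : zigzag Z i.*2 = nth 0 Z.1 i.
Proof. by rewrite /zigzag odd_double doubleK. Qed.

Lemma zigzag_bottom Z i : zigzag Z i.*2.+1 = nth 0 Z.2 i.
Proof. by rewrite /zigzag /= odd_double /= uphalf_double. Qed.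

Lemma zigzag_nonincr Z m p q : special0 Z m -> p <= q -> q < m.*2 -> zigzag Z q <= zigzag Z p.
Proof.
case=> _ _ _ _ [H H'] pq qm.
have step i : i.+1 < m.*2 -> zigzag Z i.+1 <= zigzag Z i.
  rewrite -[i]odd_double_half; case: (odd i) => /=.
  - rewrite add1n -doubleS zigzag_top zigzag_bottom => im.
    by apply: (H' i./2.+1); rewrite /=; lia.
  - rewrite add0n zigzag_top zigzag_bottom => im.
    by apply: (H i./2.+1); rewrite /=; lia.
apply: (homo_leq_in (D := [pred i | i < m.*2]) (f := zigzag Z) (r := fun x y => y <= x)
          _ _ _ _ (leq_ltn_trans pq qm) qm pq) => //.
- by move=> x y z /= yx zy; apply: leq_trans zy yx.
- by move=> i j /= _ jm k /andP [_ kj]; apply: ltn_trans kj jm.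
- by move=> i _; apply: step.
Qed.

(* The neighbours of the two cells of a consecutive pair, as needed to keep the
   rows sorted after the swap. *)
Lemma consecutive_pair_order Z' m' k l : special0 Z' m' ->
  0 < k <= m' -> 0 < l <= m' -> (l = k \/ l.+1 = k) ->
  [/\ 0 < k.-1 -> nth 0 Z'.2 l.-1 <= nth 0 Z'.1 k.-1.-1,
      k.-1.+1 < m' -> nth 0 Z'.1 k.-1.+1 <= nth 0 Z'.2 l.-1,
      0 < l.-1 -> nth 0 Z'.1 k.-1 <= nth 0 Z'.2 l.-1.-1 &
      l.-1.+1 < m' -> nth 0 Z'.2 l.-1.+1 <= nth 0 Z'.1 k.-1].
Proof.
move=> sZ' k_range l_range lk; split=> h; rewrite -!zigzag_top -!zigzag_bottom.
all: by apply: (zigzag_nonincr sZ'); clear sZ'; lia.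
Qed.

Lemma perm_swap (s t M : seq nat) j d : uniq s -> j < size s -> d \notin s ->
  uniq t -> d \in t -> nth 0 s j \notin t ->
  (forall x, (x \in M) = (x == nth 0 s j) || (x == d)) ->
  perm_eq ([seq x <- s | x \notin M] ++ [seq x <- t | x \in M]) (set_nth 0 s j d).
Proof.
move=> Us Hj ds Ut dt cs HM.
have -> : [seq x <- s | x \notin M] = rem (nth 0 s j) s.
  rewrite rem_filter //; apply: eq_in_filter => x xs; rewrite HM /=.
  by case: (eqVneq x d) => [xd|_]; [rewrite -xd xs in ds | rewrite orbF].
have -> : [seq x <- t | x \in M] = [:: d].
  rewrite -(filter_pred1_uniq Ut dt); apply: eq_in_filter => x xt; rewrite HM.
  by case: eqVneq => // xc; rewrite -xc xt in cs.
by rewrite remE index_uniq // set_nthE Hj -catA perm_cat2l perm_catC.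
Qed.

Lemma sort_perm_nonincr (s t : seq nat) : perm_eq s t -> nonincr t ->
  sort (fun x y => y <= x) s = t.
Proof.
move=> st ot; rewrite -(sorted_sort nonincr_trans ot); apply/perm_sortP => //.
- by move=> x y; apply: leq_total.
- exact: nonincr_trans.
- by move=> x y /andP [yx xy]; apply/eqP; rewrite eqn_leq xy yx.
Qed.

Lemma set_nth_nonincr s j d : nonincr s -> j < size s ->
  (0 < j -> d <= nth 0 s j.-1) -> (j.+1 < size s -> nth 0 s j.+1 <= d) ->
  nonincr (set_nth 0 s j d).
Proof.
move=> /(sortedP 0) os js dl dr; apply/(sortedP 0) => i.
rewrite size_set_nth (maxn_idPr js) !nth_set_nth /= => i_lt.
case: (eqVneq i j) => [ij|ij]; first by subst i; rewrite gtn_eqF //; apply: dr.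
by case: (eqVneq i.+1 j) => [ij1|_]; [subst j; exact: dl | exact: os].
Qed.

Lemma move_swap Z j j' : uniq Z.1 -> uniq Z.2 -> j < size Z.1 -> j' < size Z.2 ->
  nth 0 Z.1 j \notin Z.2 -> nth 0 Z.2 j' \notin Z.1 ->
  nonincr (set_nth 0 Z.1 j (nth 0 Z.2 j')) -> nonincr (set_nth 0 Z.2 j' (nth 0 Z.1 j)) ->
  move Z [:: nth 0 Z.1 j; nth 0 Z.2 j'] =
  (set_nth 0 Z.1 j (nth 0 Z.2 j'), set_nth 0 Z.2 j' (nth 0 Z.1 j)).
Proof.
move=> U1 U2 j1 j2 c2 d1 o1 o2; rewrite /move; congr pair; apply: sort_perm_nonincr => //.
- by apply: perm_swap => //; [exact: mem_nth | move=> x; rewrite !inE].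
- by apply: perm_swap => //; [exact: mem_nth | move=> x; rewrite !inE orbC].
Qed.

Lemma singles_other_row Z x : x \in singles Z -> (x \in Z.1) = (x \notin Z.2).
Proof. by rewrite mem_filter => /andP [/negPf]; case: (x \in Z.1); case: (x \in Z.2). Qed.

Lemma strdec_uniq s : strdec s -> uniq s.
Proof.
by apply: sorted_uniq; [move=> x y z /= yx zy; apply: ltn_trans zy yx | move=> x; apply: ltnn].
Qed.

Lemma move_consecutive_pair Z' m' k l : special0 Z' m' ->
  1 <= k <= m' -> 1 <= l <= m' -> (l = k \/ l.+1 = k) ->
  e Z'.1 k \in singles Z' -> e Z'.2 l \in singles Z' ->
  move Z' [:: e Z'.1 k; e Z'.2 l] =
  (set_nth 0 Z'.1 k.-1 (e Z'.2 l), set_nth 0 Z'.2 l.-1 (e Z'.1 k)).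
Proof.
move=> sZ' k_range l_range lk c_single d_single.
have [o_l o_r o_l' o_r'] := consecutive_pair_order sZ' k_range l_range lk.
case: sZ' => z1 z2 d1 d2 _; rewrite /e in c_single d_single *.
have k1 : k.-1 < size Z'.1 by rewrite z1; case/andP: k_range => /prednK <-.
have l1 : l.-1 < size Z'.2 by rewrite z2; case/andP: l_range => /prednK <-.
apply: move_swap; rewrite ?strdec_uniq //.
- by rewrite -(singles_other_row c_single) mem_nth.
- by rewrite (singles_other_row d_single) negbK mem_nth.
- by apply: set_nth_nonincr; rewrite ?strdec_nonincr // z1.
- by apply: set_nth_nonincr; rewrite ?strdec_nonincr // z2.
Qed.

Lemma ent_set_nth s j d i : 0 < j <= size s ->
  ent (set_nth 0 s j.-1 d) i = if i == j then Fin d else ent s i.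
Proof.
case: j => [|j] // /andP [_ js]; rewrite /ent size_set_nth (maxn_idPr js).
case: i => [|i] //=; rewrite eqSS nth_set_nth /=.
by case: eqVneq => // ->; rewrite js.
Qed.

Lemma forall_update (P : nat -> ext -> Prop) (f g : nat -> ext) n j y : 0 < j <= n ->
  (forall i, g i = if i == j then y else f i) ->
  (forall i, 0 < i <= n -> P i (f i)) ->
  (forall i, 0 < i <= n -> P i (g i)) <-> P j y.
Proof.
move=> j_range gE Pf; split=> [/(_ j j_range)|Py i i_range]; first by rewrite gE eqxx.
by rewrite gE; case: eqVneq => [->|_] //; apply: Pf.
Qed.

Lemma interlace_update s L L' k l x y : 0 < k <= size L'.1 -> 0 < l <= size L'.2 ->
  interlace s L L' ->
  interlace s L (set_nth 0 L'.1 k.-1 x, set_nth 0 L'.2 l.-1 y) <->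
  bottom_ok s L l (Fin y) /\ top_ok s L k (Fin x).
Proof.
move=> k_range l_range [bot top].
have B := forall_update (P := bottom_ok s L) l_range (fun i => ent_set_nth y i l_range) bot.
have T := forall_update (P := top_ok s L) k_range (fun i => ent_set_nth x i k_range) top.
have size_k : maxn k.-1.+1 (size L'.1) = size L'.1.
  by apply/maxn_idPr; case/andP: k_range => /prednK ->.
have size_l : maxn l.-1.+1 (size L'.2) = size L'.2.
  by apply/maxn_idPr; case/andP: l_range => /prednK ->.
by rewrite /interlace /= !size_set_nth size_k size_l B T.
Qed.

Lemma special0_ent_le Z m i : special0 Z m -> 0 < i <= m ->
  ext_le (ent Z.2 i) (ent Z.1 i) /\ (i < m -> ext_le (ent Z.1 i.+1) (ent Z.2 i)).
Proof.
case=> z1 z2 _ _ [H H'] /[dup] /andP [i_gt0 im] i_range; split.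
  by rewrite !ent_fin ?z1 ?z2 //; exact: H.
by move=> i_lt; rewrite !ent_fin ?z1 ?z2 ?i_range //; apply: H'; rewrite i_gt0.
Qed.

(* Case l = k: since d_k <= c_k, the conditions c_k vs a_(k+1) and d_k vs
   b_(k-1) are inherited from the interlacing of Z and Z'. *)
Lemma swap_same_index s Z Z' m' k : special0 Z' m' -> 0 < k <= m' -> interlace s Z Z' ->
  bottom_ok s Z k (ent Z'.1 k) /\ top_ok s Z k (ent Z'.2 k) <->
  cmp s (ent Z'.1 k) (ent Z.1 k) && cmp (~~ s) (ent Z.2 k) (ent Z'.2 k).
Proof.
move=> sZ' k_range [bot top]; have [dc _] := special0_ent_le sZ' k_range.
case: sZ' => z1' z2' _ _ _; rewrite z1' z2' in bot top.
have [_ a_d] := bot k k_range; have [c_b _] := top k k_range.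
have a_c := cmp_le_trans a_d dc; have d_b := le_cmp_trans dc c_b.
by split=> [[[-> _] [_ ->]] // | /andP [ca bd]]; do 2!split.
Qed.

(* Case l = k - 1: since c_k <= d_(k-1), the conditions c_k vs a_(k-1) and
   d_(k-1) vs b_k are inherited from the interlacing of Z and Z'. *)
Lemma swap_previous_index s Z Z' m' l : special0 Z' m' -> 0 < l -> l < m' -> interlace s Z Z' ->
  bottom_ok s Z l (ent Z'.1 l.+1) /\ top_ok s Z l.+1 (ent Z'.2 l) <->
  cmp (~~ s) (ent Z.1 l.+1) (ent Z'.1 l.+1) && cmp s (ent Z'.2 l) (ent Z.2 l).
Proof.
move=> sZ' l_gt0 lm [bot top].
have l_range : 0 < l <= m' by rewrite l_gt0 ltnW.
have [_ /(_ lm) cd] := special0_ent_le sZ' l_range.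
case: sZ' => z1' z2' _ _ _; rewrite z1' z2' in bot top.
have [d_a _] := bot l l_range; have [_ b_c] := top l.+1 lm.
have c_a := le_cmp_trans cd d_a; have b_d := cmp_le_trans b_c cd.
rewrite /top_ok /= ent_entb //.
by split=> [[[_ ->] [-> _]] // | /andP [ac db]]; do 2!split.
Qed.

Lemma Dset_iff Z Z' L L' : Sbar Z L -> defect L = 1%R -> Sbar Z' L' -> defect L' = 0%R ->
  Dset Z Z' L L' <-> interlace (size Z'.1 == size Z.2) L L'.
Proof.
move=> SL dL SL' dL'; split=> [[/BplusE [_ IL] _ _] // | IL].
by split=> //; apply/BplusE; rewrite dL dL' GRing.subrr.
Qed.

Lemma Sbar_self Z : nonincr Z.1 -> nonincr Z.2 -> Sbar Z Z.
Proof.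
move=> o1 o2; exists [::]; split=> //; rewrite /move.
have keep_all (s : seq nat) : [seq x <- s | x \notin [::]] = s by elim: s => //= x s ->.
have keep_none (s : seq nat) : [seq x <- s | x \in [::]] = [::] by elim: s.
by rewrite !keep_all !keep_none !cats0 !(sorted_sort nonincr_trans) //; case: Z o1 o2.
Qed.

Lemma swap_defect (Z : symbol) j j' x y : j < size Z.1 -> j' < size Z.2 ->
  defect (set_nth 0 Z.1 j x, set_nth 0 Z.2 j' y) = defect Z.
Proof. by move=> j1 j2; rewrite /defect /= !size_set_nth (maxn_idPr j1) (maxn_idPr j2). Qed.

Theorem lemma0301 (m m' : nat) (Z Z' : symbol) (k l : nat) :
  special1 Z m -> special0 Z' m' -> (m' = m \/ m' = m.+1) ->
  1 <= k <= m' -> 1 <= l <= m' -> (l = k \/ l.+1 = k) ->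
  e Z'.1 k \in singles Z' -> e Z'.2 l \in singles Z' ->
  (exists L L', Dset Z Z' L L') ->
  (Dset Z Z' Z (move Z' [:: e Z'.1 k; e Z'.2 l]) <->
   if m' == m then
     (if l == k then ext_lt (ent Z'.1 k) (ent Z.1 k) && ext_le (ent Z.2 k) (ent Z'.2 k)
      else ext_le (ent Z.1 k) (ent Z'.1 k) && ext_lt (ent Z'.2 k.-1) (ent Z.2 k.-1))
   else
     (if l == k then ext_le (ent Z'.1 k) (ent Z.1 k) && ext_lt (ent Z.2 k) (ent Z'.2 k)
      else ext_lt (ent Z.1 k) (ent Z'.1 k) && ext_le (ent Z'.2 k.-1) (ent Z.2 k.-1))).
Proof.
move=> sZ sZ' hm k_range l_range lk c_single d_single [L [L' DL]].
have mm' : m <= m' <= m.+1 by case: hm => ->; rewrite leqnn ?leqnSn ?andbT.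
have IZZ' := Dset_interlace sZ sZ' mm' DL.
have swapE := move_consecutive_pair sZ' k_range l_range lk c_single d_single.
case: (sZ) => z1 z2 /strdec_nonincr o1 /strdec_nonincr o2 _; case: (sZ') => z1' z2' _ _ _.
have k1 : 0 < k <= size Z'.1 by rewrite z1'.
have l1 : 0 < l <= size Z'.2 by rewrite z2'.
have dZ : defect Z = 1%R by rewrite /defect z1 z2; lia.
have SZ' : Sbar Z' (move Z' [:: e Z'.1 k; e Z'.2 l]).
  by exists [:: e Z'.1 k; e Z'.2 l]; split=> // x; rewrite !inE => /orP [] /eqP ->.
have dZ' : defect (move Z' [:: e Z'.1 k; e Z'.2 l]) = 0%R.
  rewrite swapE swap_defect /defect ?z1' ?z2' ?GRing.subrr //.
  - by case/andP: k_range => /prednK ->.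
  - by case/andP: l_range => /prednK ->.
rewrite (Dset_iff (Sbar_self o1 o2) dZ SZ' dZ') swapE z1' z2 interlace_update //.
rewrite /e -!ent_fin //; move: IZZ'; move: (m' == m) => s IZZ'.
case: lk => [lk | kl]; [subst l | subst k].
- by rewrite eqxx (swap_same_index sZ' k_range IZZ'); case: s IZZ'.
- have [l_gt0 _] := andP l_range; have [_ lm] := andP k_range.
  by rewrite ltn_eqF // (swap_previous_index sZ' l_gt0 lm IZZ'); case: s IZZ'.
Qed.
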